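(* Let $\Omega=\{x_i:i\in\mathbb N\}\cup\{a_j:j\in\mathbb N\}$, $\mathbb G$, $\mathbb D$, $\mathbb C$, $\mathbb S$, $\mathbb R_X$ be as in the context. Then: (1) $\mathbb S$ is a $\mathbb C$-saturated set; (2) each $\mathbb R_X$ is saturated; (3) for each propositional variable $X$, $\mathbb R_X=\{a_j:(a_j:X)\in\mathbb D\}\leadsto\mathbb S$ (each $a_j$ viewed as a one-element sequence); (4) $\mathbb M=\langle\mathbb C,\mathbb S,(\mathbb R_X)_{X\in\mathcal P}\rangle$ is a model.
   Context: $\lambda\mu$-terms: $t::= x\mid \lambda x.t\mid (t\;t)\mid \mu a.t\mid (a\;t)$ over disjoint infinite sets of $\lambda$-variables and $\mu$-variables; types built from the set $\mathcal P$ of propositional variables and $\perp$ with $\to$. Reduction $(\lambda x.u\;v)\triangleright u[x:=v]$, $(\mu a.u\;v)\triangleright\mu a.u[a:=^*v]$ ($u[a:=^*v]$ replaces each subterm $(a\;w)$ of $u$ by $(a\;(w\;v))$), $\triangleright^*$ reflexive transitive compatible closure. Typing rules for $\Gamma\vdash t:A;\Delta$: (ax) $\Gamma\vdash x:A;\Delta$ if $x:A\in\Gamma$; ($\to_i$), ($\to_e$) as usual; ($\mu$) from $\Gamma\vdash t:\perp;\Delta,a:A$ infer $\Gamma\vdash\mu a.t:A;\Delta$; ($\perp$) from $\Gamma\vdash t:A;\Delta,a:A$ infer $\Gamma\vdash(a\;t):\perp;\Delta,a:A$. Term model: $\Omega=\{x_i\}_{i\in\mathbb N}\cup\{a_j\}_{j\in\mathbb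 N}$ is an enumeration of infinite sets of $\lambda$- and $\mu$-variables; $(A_i)_{i\in\mathbb N}$ enumerates all types, each type occurring infinitely often; $(B_j)_{j\in\mathbb N}$ enumerates all types with $\perp$ occurring infinitely often. $\mathbb G=\{x_i:A_i\}$, $\mathbb D=\{a_j:B_j\}$. For a term $u$ with free variables in $\Omega$, $\mathbb G\vdash u:C;\mathbb D$ means $\mathbb G_u\vdash u:C;\mathbb D_u$ where $\mathbb G_u,\mathbb D_u$ are the restrictions to the free variables of $u$; $\mathbb G\vdash^* u:C;\mathbb D$ means there is $u'$ with $u\triangleright^*u'$ and $\mathbb G\vdash u':C;\mathbb D$. $\mathbb C=\{a_j:(a_j:\perp)\in\mathbb D\}$, $\mathbb S=\{t:\mathbb G\vdash^*t:\perp;\mathbb D\}$, $\mathbb R_X=\{t:\mathbb G\vdash^*t:X;\mathbb D\}$. Semantic notions: $\mathcal S$ saturated if $v\triangleright^*u\in\mathcal S$ implies $v\in\mathcal S$; $\mathcal C$-saturated (for an infinite set $\mathcal C$ of $\mu$-variables) if saturated and $t\in\mathcal S$ implies $\mu a.t,(a\;t)\in\mathcal S$ for $a\in\mathcal C$. $\mathcal T'$ = terms $\cup$ $\mu$-variables; for $\pi\in\mathcal T'^{<\omega}$: $(t\;\emptyset)=t$, $(t\;u\pi')=((t\;u)\;\pi')$, $(t\;a\pi')=((a\;t)\;\pi')$; $\mathcal X\leadsto\mathcal S=\{t:(t\;\pi)\in\mathcal S\ \forall\pi\in\mathcal X\}$ for $\mathcal X\subseteq\mathcal T'^{<\omega}$;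 $\mathcal K\leadsto\mathcal L=\{t:(t\;u)\in\mathcal L\ \forall u\in\mathcal K\}$ for sets of terms. A model $\langle\mathcal C,\mathcal S,\{\mathcal R_i\}\rangle$ consists of a $\mathcal C$-saturated $\mathcal S$ and sets $\mathcal R_i=\mathcal X_i\leadsto\mathcal S$ with $\mathcal X_i\subseteq\mathcal T'^{<\omega}$ (the model being the smallest family containing $\mathcal S$, the $\mathcal R_i$, closed under $\leadsto$). *)

(* plain Rocq. Lambda-mu calculus in de Bruijn representation,
   with two separate index spaces (lambda-variables and mu-variables). *)
From Stdlib Require Import Arith List Relations.
Import ListNotations.

Inductive type : Type :=
| TVar (X : nat)
| Bot
| Arr (A B : type).

(* lambda-mu terms; Var x is a lambda-variable, Name a t is (a t). *)
Inductive term : Type :=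
| Var (x : nat)
| Lam (t : term)
| App (t u : term)
| Mu (t : term)
| Name (a : nat) (t : term).

Definition upr (r : nat -> nat) (n : nat) : nat :=
  match n with 0 => 0 | S m => S (r m) end.

Fixpoint ren_lam (r : nat -> nat) (t : term) : term :=
  match t with
  | Var x => Var (r x)
  | Lam u => Lam (ren_lam (upr r) u)
  | App u v => App (ren_lam r u) (ren_lam r v)
  | Mu u => Mu (ren_lam r u)
  | Name a u => Name a (ren_lam r u)
  end.

Fixpoint ren_mu (r : nat -> nat) (t : term) : term :=
  match t with
  | Var x => Var x
  | Lam u => Lam (ren_mu r u)
  | App u v => App (ren_mu r u) (ren_mu r v)
  | Mu u => Mu (ren_mu (upr r) u)
  | Name a u => Name (r a) (ren_mu r u)
  end.

Definition up_subst (s : nat -> term) (n : nat) : term :=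
  match n with 0 => Var 0 | S m => ren_lam S (s m) end.

Fixpoint subst (s : nat -> term) (t : term) : term :=
  match t with
  | Var x => s x
  | Lam u => Lam (subst (up_subst s) u)
  | App u v => App (subst s u) (subst s v)
  | Mu u => Mu (subst (fun n => ren_mu S (s n)) u)
  | Name a u => Name a (subst s u)
  end.

Definition beta_subst (v : term) (n : nat) : term :=
  match n with 0 => v | S m => Var m end.

(* structural substitution u[a :=* v] where a is the mu-variable of index k:
   every subterm (a w) becomes (a (w[a:=*v] v)) *)
Fixpoint sstruct (k : nat) (v : term) (u : term) : term :=
  match u with
  | Var x => Var x
  | Lam w => Lam (sstruct k (ren_lam S v) w)
  | App w1 w2 => App (sstruct k v w1) (sstruct k v w2)
  | Mu w => Mu (sstruct (S k) (ren_mu S v) w)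
  | Name a w =>
      if Nat.eqb a k then Name a (App (sstruct k v w) v)
      else Name a (sstruct k v w)
  end.

Inductive red1 : term -> term -> Prop :=
| red_beta u v : red1 (App (Lam u) v) (subst (beta_subst v) u)
| red_mu u v : red1 (App (Mu u) v) (Mu (sstruct 0 (ren_mu S v) u))
| red_lam t t' : red1 t t' -> red1 (Lam t) (Lam t')
| red_appl t t' u : red1 t t' -> red1 (App t u) (App t' u)
| red_appr t u u' : red1 u u' -> red1 (App t u) (App t u')
| red_muc t t' : red1 t t' -> red1 (Mu t) (Mu t')
| red_name a t t' : red1 t t' -> red1 (Name a t) (Name a t').

Definition red (t u : term) : Prop := clos_refl_trans term red1 t u.

Definition scons (A : type) (G : nat -> type) (n : nat) : type :=
  match n with 0 => A | S m => G m end.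

(* typing  G |- t : A ; D  (contexts are total assignments on de Bruijn
   indices; only the free variables of t are ever consulted) *)
Inductive typing : (nat -> type) -> term -> type -> (nat -> type) -> Prop :=
| ty_ax G D x : typing G (Var x) (G x) D
| ty_lam G D A B t : typing (scons A G) t B D -> typing G (Lam t) (Arr A B) D
| ty_app G D A B t u :
    typing G t (Arr A B) D -> typing G u A D -> typing G (App t u) B D
| ty_mu G D A t : typing G t Bot (scons A D) -> typing G (Mu t) A D
| ty_bot G D a t : typing G t (D a) D -> typing G (Name a t) Bot D.

(* mu a. t for a free mu-variable a: bind a, keep the other free names *)
Definition mu_abs (a : nat) (t : term) : term :=
  Mu (ren_mu (fun b => if Nat.eqb b a then 0 else S b) t).

Definition infinite_set (C : nat -> Prop) : Prop :=
  forall n, exists a, n <= a /\ C a.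

Definition saturated (S : term -> Prop) : Prop :=
  forall u v, red v u -> S u -> S v.

Definition C_saturated (C : nat -> Prop) (S : term -> Prop) : Prop :=
  infinite_set C /\ saturated S /\
  (forall t a, C a -> S t -> S (mu_abs a t) /\ S (Name a t)).

Inductive elt : Type :=
| ETerm (u : term)
| EMu (a : nat).

Fixpoint app_stack (t : term) (pi : list elt) : term :=
  match pi with
  | [] => t
  | ETerm u :: pi' => app_stack (App t u) pi'
  | EMu a :: pi' => app_stack (Name a t) pi'
  end.

Definition arrow_stack (X : list elt -> Prop) (S : term -> Prop) : term -> Prop :=
  fun t => forall pi, X pi -> S (app_stack t pi).

Definition arrow_terms (K L : term -> Prop) : term -> Prop :=
  fun t => forall u, K u -> L (App t u).

Definition is_model {I : Type} (C : nat -> Prop) (S : term -> Prop)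
  (R : I -> term -> Prop) : Prop :=
  C_saturated C S /\
  forall i, exists Xi : list elt -> Prop, forall t, R i t <-> arrow_stack Xi S t.

(* The term model, for enumerations As (of A_i) and Bs (of B_j);
   G = {x_i : A_i}, D = {a_j : B_j}. *)
Definition GG (As : nat -> type) : nat -> type := As.
Definition DD (Bs : nat -> type) : nat -> type := Bs.

Definition typ_star (As Bs : nat -> type) (t : term) (A : type) : Prop :=
  exists t', red t t' /\ typing (GG As) t' A (DD Bs).

Definition CC (Bs : nat -> type) : nat -> Prop := fun a => Bs a = Bot.
Definition SS (As Bs : nat -> type) : term -> Prop := fun t => typ_star As Bs t Bot.
Definition RR (As Bs : nat -> type) (X : nat) : term -> Prop :=
  fun t => typ_star As Bs t (TVar X).

Definition names_of (Bs : nat -> type) (X : nat) : list elt -> Prop :=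
  fun pi => exists j, Bs j = TVar X /\ pi = [EMu j].

(* The predicates of the term model are "typable after some reduction", so they
   are closed under backward reduction by construction.  The C-closure of S and
   the equation R_X = {a_j : (a_j : X) in D} ~> S rest on the rules (mu) and
   (bot): a name of type X turns a term of type X into one of type bottom, and
   since Name a t only reduces inside t, every reduct of (a_j t) typed with
   bottom has the form (a_j t') with t' of type X.  The only syntactic work is
   to show that renaming mu-variables commutes with reduction and preserves
   typing, which is what makes mu_abs well behaved. *)
From Stdlib Require Import Arith List Relations.
Import ListNotations.

Lemma ren_mu_ext r r' t : (forall n, r n = r' n) -> ren_mu r t = ren_mu r' t.
Proof.
  revert r r'; induction t; intros r r' H; simpl; f_equal; auto.
  apply IHt; intros [|n]; simpl; auto.
Qed.

Lemma subst_ext s s' t : (forall n, s n = s' n) -> subst s t = subst s' t.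
Proof.
  revert s s'; induction t; intros s s' H; simpl; f_equal; auto.
  - apply IHt; intros [|n]; simpl; rewrite ?H; auto.
  - apply IHt; intros n; rewrite H; auto.
Qed.

Lemma ren_mu_comp r1 r2 t :
  ren_mu r1 (ren_mu r2 t) = ren_mu (fun n => r1 (r2 n)) t.
Proof.
  revert r1 r2; induction t; intros r1 r2; simpl; f_equal; auto.
  rewrite IHt; apply ren_mu_ext; intros [|n]; reflexivity.
Qed.

Lemma ren_mu_ren_lam r s t : ren_mu r (ren_lam s t) = ren_lam s (ren_mu r t).
Proof. revert r s; induction t; intros r s; simpl; f_equal; auto. Qed.

Lemma ren_mu_subst r s t :
  ren_mu r (subst s t) = subst (fun n => ren_mu r (s n)) (ren_mu r t).
Proof.
  revert r s; induction t; intros r s; simpl; f_equal; auto.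
  - rewrite IHt; apply subst_ext; intros [|n]; simpl; auto.
    apply ren_mu_ren_lam.
  - rewrite IHt; apply subst_ext; intros n.
    rewrite !ren_mu_comp; apply ren_mu_ext; reflexivity.
Qed.

(* Injectivity at k is needed: a renaming identifying another name with k would
   make the structural substitution act on occurrences it did not act on. *)
Lemma ren_mu_sstruct r k v u :
  (forall a, r a = r k -> a = k) ->
  ren_mu r (sstruct k v u) = sstruct (r k) (ren_mu r v) (ren_mu r u).
Proof.
  revert r k v; induction u; intros r k v Hinj; simpl.
  - reflexivity.
  - rewrite IHu, ren_mu_ren_lam; auto.
  - f_equal; auto.
  - rewrite IHu; simpl.
    + do 2 f_equal. rewrite !ren_mu_comp; apply ren_mu_ext; reflexivity.
    + intros [|a] E; simpl in E; [discriminate|].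
      injection E; intros; f_equal; auto.
  - destruct (Nat.eqb a k) eqn:Eak.
    + apply Nat.eqb_eq in Eak; subst. rewrite Nat.eqb_refl; simpl.
      rewrite IHu; auto.
    + destruct (Nat.eqb (r a) (r k)) eqn:Er.
      * apply Nat.eqb_eq, Hinj in Er; subst.
        rewrite Nat.eqb_refl in Eak; discriminate.
      * simpl; rewrite IHu; auto.
Qed.

Lemma red1_ren_mu r t t' : red1 t t' -> red1 (ren_mu r t) (ren_mu r t').
Proof.
  intros Hred; revert r; induction Hred; intros r; simpl;
    try (constructor; auto; fail).
  - rewrite ren_mu_subst.
    replace (subst (fun n => ren_mu r (beta_subst v n)) (ren_mu r u))
      with (subst (beta_subst (ren_mu r v)) (ren_mu r u)) by
      (apply subst_ext; intros [|n]; reflexivity).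
    constructor.
  - rewrite ren_mu_sstruct by (intros [|a]; simpl; auto; discriminate).
    replace (ren_mu (upr r) (ren_mu S v)) with (ren_mu S (ren_mu r v)) by
      (rewrite !ren_mu_comp; apply ren_mu_ext; reflexivity).
    constructor.
Qed.

Lemma red_congr (f : term -> term) t t' :
  (forall u u', red1 u u' -> red1 (f u) (f u')) -> red t t' -> red (f t) (f t').
Proof.
  intros Hf Hred; induction Hred.
  - apply rt_step, Hf; assumption.
  - apply rt_refl.
  - eapply rt_trans; eassumption.
Qed.

Lemma red_ren_mu r t t' : red t t' -> red (ren_mu r t) (ren_mu r t').
Proof. apply red_congr, red1_ren_mu. Qed.

Lemma red_Name a t t' : red t t' -> red (Name a t) (Name a t').
Proof. apply red_congr; constructor; assumption. Qed.

Lemma red_mu_abs a t t' : red t t' -> red (mu_abs a t) (mu_abs a t').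
Proof.
  intros Hred; apply (red_congr Mu); [constructor; assumption|].
  apply red_ren_mu, Hred.
Qed.

Lemma red_Name_inv a t u : red (Name a t) u -> exists t', u = Name a t' /\ red t t'.
Proof.
  intros Hred; apply clos_rt_rt1n in Hred.
  remember (Name a t) as w eqn:Ew; revert t Ew.
  induction Hred as [|w w' u Hstep _ IH]; intros t0 ->.
  - exists t0; split; [reflexivity | apply rt_refl].
  - inversion Hstep as [| | | | | |? ? t1 Ht1]; subst.
    destruct (IH t1 eq_refl) as [t' [-> Ht']].
    exists t'; split; [reflexivity|].
    eapply rt_trans; [apply rt_step, Ht1 | exact Ht'].
Qed.

Lemma typing_ren_mu G D D' r t A :
  (forall b, D' (r b) = D b) -> typing G t A D -> typing G (ren_mu r t) A D'.
Proof.
  intros HD Ht; revert D' r HD; induction Ht; intros D' r HD; simpl.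
  - constructor.
  - constructor; auto.
  - econstructor; eauto.
  - constructor; apply IHHt; intros [|b]; simpl; auto.
  - constructor; rewrite HD; auto.
Qed.

Lemma typing_mu_abs G D a t :
  typing G t Bot D -> typing G (mu_abs a t) (D a) D.
Proof.
  intros Ht; constructor; apply (typing_ren_mu _ D); [|exact Ht].
  intros b; destruct (Nat.eqb b a) eqn:E; simpl; [|reflexivity].
  apply Nat.eqb_eq in E; subst; reflexivity.
Qed.

Section TermModel.

Variables As Bs : nat -> type.

Lemma typ_star_saturated A : saturated (fun t => typ_star As Bs t A).
Proof.
  intros u v Hvu [u' [Hu' Hty]].
  exists u'; split; [eapply rt_trans; eassumption | exact Hty].
Qed.

Lemma typ_star_mu_abs a t :
  typ_star As Bs t Bot -> typ_star As Bs (mu_abs a t) (Bs a).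
Proof.
  intros [t' [Ht' Hty]]; exists (mu_abs a t'); split.
  - apply red_mu_abs, Ht'.
  - apply typing_mu_abs, Hty.
Qed.

Lemma typ_star_Name a t :
  typ_star As Bs t (Bs a) -> typ_star As Bs (Name a t) Bot.
Proof.
  intros [t' [Ht' Hty]]; exists (Name a t'); split.
  - apply red_Name, Ht'.
  - constructor; exact Hty.
Qed.

Lemma typ_star_Name_inv a t :
  typ_star As Bs (Name a t) Bot -> typ_star As Bs t (Bs a).
Proof.
  intros [u [Hu Hty]].
  destruct (red_Name_inv _ _ _ Hu) as [t' [-> Ht']].
  inversion Hty; subst; exists t'; split; assumption.
Qed.

Lemma SS_C_saturated :
  infinite_set (CC Bs) -> C_saturated (CC Bs) (SS As Bs).
Proof.
  intros Hinf; split; [exact Hinf | split; [apply typ_star_saturated|]].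
  intros t a Ha Ht; unfold CC in Ha; unfold SS.
  split; [rewrite <- Ha; apply typ_star_mu_abs | apply typ_star_Name; rewrite Ha];
    exact Ht.
Qed.

Lemma RR_names_ofE X :
  (exists j, Bs j = TVar X) ->
  forall t, RR As Bs X t <-> arrow_stack (names_of Bs X) (SS As Bs) t.
Proof.
  intros [j Hj] t; split.
  - intros Ht pi [k [Hk ->]]; simpl.
    apply typ_star_Name; rewrite Hk; exact Ht.
  - intros Ht; unfold RR; rewrite <- Hj.
    apply typ_star_Name_inv, (Ht [EMu j]); exists j; split; auto.
Qed.

End TermModel.

Theorem mainTheorem11 (As Bs : nat -> type)
  (HAs : forall (A : type) (n : nat), exists i, n <= i /\ As i = A)
  (HBs_all : forall A : type, exists j, Bs j = A)
  (HBs_bot : forall n : nat, exists j, n <= j /\ Bs j = Bot) :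
  C_saturated (CC Bs) (SS As Bs)
  /\ (forall X : nat, saturated (RR As Bs X))
  /\ (forall (X : nat) (t : term),
        RR As Bs X t <-> arrow_stack (names_of Bs X) (SS As Bs) t)
  /\ is_model (CC Bs) (SS As Bs) (RR As Bs).
Proof.
  assert (HS : C_saturated (CC Bs) (SS As Bs)) by exact (SS_C_saturated As Bs HBs_bot).
  assert (HR : forall X t, RR As Bs X t <-> arrow_stack (names_of Bs X) (SS As Bs) t)
    by (intros X; apply RR_names_ofE, HBs_all).
  split; [exact HS|]; split; [intros X; apply typ_star_saturated|].
  split; [exact HR|]; split; [exact HS|].
  intros X; exists (names_of Bs X); apply HR.
Qed.
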